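(* Let $n\ge2$ and let $g_1,\dots,g_r\in\mathbb R[X_1,\dots,X_n]$ satisfy $1-\|\mathbf X\|_2^2\in\mathcal Q(\mathbf g)$ and $\|g_i\|\le\tfrac12$ for all $i$. Let $\mathfrak c\ge1,\textit{Ł}\ge1$ satisfy $D(x)^{\textit{Ł}}\le\mathfrak c\,G(x)$ on $[-1,1]^n$, and let $\gamma(n,\mathbf g)\ge1$ be a constant depending only on $n,\mathbf g$ such that every $h\in\mathbb R[\mathbf X]$ with $\min_S h>0$ lies in $\mathcal Q_\ell(\mathbf g)$ whenever $\ell\ge\gamma(n,\mathbf g)\,d(h)^{3.5n\textit{Ł}}\epsilon(h)^{-2.5n\textit{Ł}}$. Let $f\in\mathbb R[\mathbf X]$ with $f\ge0$ on $S$ and $f^*=\min_S f$. Then for every $0<\epsilon\le\|f\|$ we have $f-f^*+\epsilon\in\mathcal Q_\ell(\mathbf g)$ whenever $$\ell\ge\gamma'(n,\mathbf g)\,d(f)^{3.5n\textit{Ł}}\,\|f\|^{2.5n\textit{Ł}}\,\epsilon^{-2.5n\textit{Ł}},\qquad \gamma'(n,\mathbf g)=3^{2.5n\textit{Ł}}\gamma(n,\mathbf g).$$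
   Context: $\Sigma^2$ sums of squares; $S=\{x:g_i(x)\ge0\ \forall i\}$ (nonempty); $\mathcal Q(\mathbf g)=\Sigma^2+\sum_i\Sigma^2g_i$; $\mathcal Q_\ell(\mathbf g)=\{s_0+\sum_is_ig_i: s_j\in\Sigma^2,\deg s_0\le\ell,\deg(s_ig_i)\le\ell\}$; $\|h\|=\max_{[-1,1]^n}|h|$; $\|\mathbf X\|_2^2=\sum X_i^2$; $d(h)=\deg h$; $\epsilon(h)=\min_S h/\|h\|$; $G(x)=|\min\{g_1(x),\dots,g_r(x),0\}|$, $D(x)=\operatorname{dist}(x,S)$. *)

From mathcomp Require Import all_boot all_order all_algebra.
From mathcomp Require Import mpoly.
From mathcomp Require Import classical_sets reals exp.

Set Implicit Arguments. Unset Strict Implicit. Unset Printing Implicit Defensive.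
Import Order.TTheory GRing.Theory Num.Theory.
Local Open Scope ring_scope.
Local Open Scope classical_set_scope.

Section Defs.
Variables (R : realType) (n : nat).
Notation poly := {mpoly R[n]}.

Definition is_sos (p : poly) : Prop :=
  exists s : seq poly, p = \sum_(q <- s) q ^+ 2.

(* total degree d(h); msize p = 1 + total degree (0 for p = 0) *)
Definition deg (p : poly) : nat := (msize p).-1.

Definition cube (x : 'I_n -> R) : Prop := forall i, -1 <= x i <= 1.

Definition supnorm (h : poly) : R := sup [set `|h.@[x]| | x in cube].

Variable r : nat.
Variable g : 'I_r -> poly.

Definition semialg : set ('I_n -> R) := [set x | forall i, 0 <= (g i).@[x]].

Definition QM (p : poly) : Prop :=
  exists (s0 : poly) (s : 'I_r -> poly),
    [/\ is_sos s0, forall i, is_sos (s i) & p = s0 + \sum_i s i * g i].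

(* truncated quadratic module Q_l(g): deg s0 <= l, deg (s_i g_i) <= l *)
Definition QMtr (l : nat) (p : poly) : Prop :=
  exists (s0 : poly) (s : 'I_r -> poly),
    [/\ is_sos s0, forall i, is_sos (s i),
        (msize s0 <= l.+1)%N, forall i, (msize (s i * g i) <= l.+1)%N
      & p = s0 + \sum_i s i * g i].

Definition minS (h : poly) : R := inf [set h.@[x] | x in semialg].

Definition epsh (h : poly) : R := minS h / supnorm h.

Definition Gfun (x : 'I_n -> R) : R := `| \big[Num.min/0]_i (g i).@[x] |.

Definition distS (x : 'I_n -> R) : R :=
  inf [set Num.sqrt (\sum_i (x i - y i) ^+ 2) | y in semialg].

End Defs.

From mathcomp Require Import all_boot all_order all_algebra.
From mathcomp Require Import mpoly.
From mathcomp Require Import classical_sets reals exp.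
From mathcomp Require Import ring lra zify.
Set Implicit Arguments. Unset Strict Implicit. Unset Printing Implicit Defensive.
Import Order.TTheory GRing.Theory Num.Theory.
Local Open Scope classical_set_scope.
Local Open Scope ring_scope.

(* The theorem is the assumed degree bound applied to h = f - f^* + eps.
   On S we have h >= eps, so min_S h >= eps > 0; the Archimedean element
   1 - |X|^2 of Q(g) puts S inside [-1,1]^n, whence 0 <= f^* <= ||f|| and
   ||h|| <= ||f|| + f^* + eps <= 3 ||f||.  Thus eps(h) >= eps / (3 ||f||),
   while d(h) <= d(f), and the bound for h is dominated by the one for f. *)

Section Positivity.
Variables (R : realType) (n r : nat) (g : 'I_r -> {mpoly R[n]}).

Lemma sos_ge0 (p : {mpoly R[n]}) x : is_sos p -> 0 <= p.@[x].
Proof.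
case=> s ->; rewrite raddf_sum /=; apply: sumr_ge0 => q _.
by rewrite rmorphXn sqr_ge0.
Qed.

Lemma QM_ge0 (p : {mpoly R[n]}) x : QM g p -> semialg g x -> 0 <= p.@[x].
Proof.
case=> s0 [s [s0_sos s_sos ->]] Sx; rewrite mevalD raddf_sum /=.
apply: addr_ge0; first exact: sos_ge0.
apply: sumr_ge0 => i _; rewrite mevalM.
by apply: mulr_ge0; [exact: sos_ge0 | exact: Sx].
Qed.

Lemma cube_sqnorm_le1 (x : 'I_n -> R) : \sum_i x i ^+ 2 <= 1 -> cube x.
Proof.
move=> x_le1 i; have : x i ^+ 2 <= 1.
  apply: le_trans x_le1; rewrite (bigD1 i) //= lerDl.
  by apply: sumr_ge0 => j _; rewrite sqr_ge0.
by move=> xi_le1; apply/andP; split; nra.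
Qed.

Lemma semialg_sub_cube x :
  QM g (1 - \sum_(i < n) 'X_i ^+ 2) -> semialg g x -> cube x.
Proof.
move=> /QM_ge0 /[apply]; rewrite mevalB meval1 subr_ge0 (raddf_sum (meval x)) /=.
by under eq_bigr => i _ do rewrite expr2 mevalM mevalXU -expr2; exact: cube_sqnorm_le1.
Qed.

End Positivity.

Lemma deg_addC (R : realType) (n : nat) (p : {mpoly R[n]}) c :
  (deg (p + c%:MP) <= deg p)%N.
Proof.
rewrite /deg; have := msizeD_le p c%:MP; rewrite msizeC.
case: (msize p =P 0%N) => [/eqP|]; last by lia.
by rewrite msize_poly_eq0 => /eqP ->; rewrite add0r msizeC; case: (c != 0).
Qed.

Section SupInf.
Variables (R : realType) (n r : nat) (g : 'I_r -> {mpoly R[n]}).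
Implicit Types (h : {mpoly R[n]}) (x : 'I_n -> R).

Lemma cube0 : cube (fun _ : 'I_n => 0 : R).
Proof. by move=> i; rewrite lerN10 ler01. Qed.

Lemma meval_cube_le h x :
  cube x -> `|h.@[x]| <= \sum_(m <- msupp h) `|h@_m|.
Proof.
move=> cx; rewrite mevalE; apply: le_trans (ler_norm_sum _ _ _) _.
apply: ler_sum => m _; rewrite normrM ler_piMr // normr_prod.
apply: prodr_ile1 => i _; rewrite normrX exprn_ge0 //= exprn_ile1 //.
by rewrite ler_norml; case/andP: (cx i).
Qed.

Lemma supnorm_ge h x : cube x -> `|h.@[x]| <= supnorm h.
Proof.
move=> cx; apply: ub_le_sup; last by exists x.
by exists (\sum_(m <- msupp h) `|h@_m|) => _ [y cy <-]; exact: meval_cube_le.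
Qed.

Lemma supnorm_le h M : (forall x, cube x -> `|h.@[x]| <= M) -> supnorm h <= M.
Proof.
move=> h_le; apply: ge_sup; first by exists `|h.@[fun=> 0]|, (fun=> 0); first exact: cube0.
by move=> _ [x cx <-]; exact: h_le.
Qed.

Lemma minS_le h m x :
  (forall y, semialg g y -> m <= h.@[y]) -> semialg g x -> minS g h <= h.@[x].
Proof.
move=> h_ge Sx; apply: (ge_inf _ (ex_intro2 _ _ x Sx erefl)).
by exists m => _ [y Sy <-]; exact: h_ge.
Qed.

Lemma minS_ge h m x :
  semialg g x -> (forall y, semialg g y -> m <= h.@[y]) -> m <= minS g h.
Proof.
move=> Sx h_ge; apply: lb_le_inf; first by exists h.@[x], x.
by move=> _ [y Sy <-]; exact: h_ge.
Qed.

Lemma minS_le_supnorm h m x :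
  QM g (1 - \sum_(i < n) 'X_i ^+ 2) ->
  (forall y, semialg g y -> m <= h.@[y]) -> semialg g x -> minS g h <= supnorm h.
Proof.
move=> S_in_cube h_ge Sx; apply: le_trans (minS_le h_ge Sx) _.
exact/(le_trans (ler_norm _))/supnorm_ge/(semialg_sub_cube S_in_cube).
Qed.

End SupInf.

Lemma powRN_le (R : realType) (a b p : R) :
  0 < a <= b -> 0 <= p -> powR b (- p) <= powR a (- p).
Proof.
case/andP=> a_gt0 a_le_b p_ge0; have b_gt0 := lt_le_trans a_gt0 a_le_b.
rewrite !powRN lef_pV2 ?posrE ?powR_gt0 //.
by apply: ge0_ler_powR; rewrite // nnegrE ltW.
Qed.

Lemma powRN_div (R : realType) (e a p : R) :
  0 < e -> 0 < a -> powR (e / a) (- p) = powR a p * powR e (- p).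
Proof.
move=> e_gt0 a_gt0.
have : powR (e / a) p * powR a p = powR e p.
  by rewrite -powRM ?divfK ?gt_eqF // ltW // divr_gt0.
rewrite !powRN => <-; rewrite invfM mulrCA divff ?mulr1 //.
by rewrite gt_eqF ?powR_gt0.
Qed.

Section Shift.
Variables (R : realType) (n r : nat) (g : 'I_r -> {mpoly R[n]}).
Variables (f : {mpoly R[n]}) (eps : R) (x0 : 'I_n -> R).
Hypotheses (S_in_cube : QM g (1 - \sum_(i < n) 'X_i ^+ 2)) (Sx0 : semialg g x0).
Hypotheses (f_ge0 : forall x, semialg g x -> 0 <= f.@[x]).
Hypotheses (eps_gt0 : 0 < eps) (eps_le : eps <= supnorm f).

Local Notation h := (f - (minS g f)%:MP + eps%:MP).

Lemma meval_shift x : h.@[x] = f.@[x] - minS g f + eps.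
Proof. by rewrite mevalD mevalB !mevalC. Qed.

Lemma minS_ge0 : 0 <= minS g f.
Proof. exact: minS_ge Sx0 f_ge0. Qed.

Lemma meval_shift_ge x : semialg g x -> eps <= h.@[x].
Proof. by move=> Sx; rewrite meval_shift; have := minS_le f_ge0 Sx; lra. Qed.

Lemma minS_shift_ge : eps <= minS g h.
Proof. exact: minS_ge Sx0 meval_shift_ge. Qed.

Lemma supnorm_shift_le : supnorm h <= 3 * supnorm f.
Proof.
apply: supnorm_le => x cx; rewrite meval_shift.
apply: le_trans (ler_normD _ _) _; rewrite (gtr0_norm eps_gt0).
apply: le_trans (lerD (ler_normB _ _) (lexx eps)) _; rewrite (ger0_norm minS_ge0).
have := supnorm_ge f cx; have := minS_le_supnorm S_in_cube f_ge0 Sx0; move: eps_le.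
by set F := supnorm f; set m := minS g f; lra.
Qed.

Lemma epsh_shift_ge : eps / (3 * supnorm f) <= epsh g h.
Proof.
have h_ge : eps <= supnorm h.
  exact: le_trans minS_shift_ge (minS_le_supnorm S_in_cube meval_shift_ge Sx0).
have h_gt0 := lt_le_trans eps_gt0 h_ge.
have f_gt0 := lt_le_trans eps_gt0 eps_le.
apply: (@le_trans _ _ (eps / supnorm h)).
  by rewrite ler_pM2l // lef_pV2 ?posrE ?supnorm_shift_le ?mulr_gt0.
by rewrite ler_pM2r ?invr_gt0 // minS_shift_ge.
Qed.

End Shift.

Theorem mainTheorem4 (R : realType) (n r : nat) (g : 'I_r -> {mpoly R[n]})
    (c L gamma : R) (f : {mpoly R[n]}) :
  (2 <= n)%N ->
  (exists x, semialg g x) ->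
  QM g (1 - \sum_(i < n) 'X_i ^+ 2) ->
  (forall i, supnorm (g i) <= 1 / 2) ->
  1 <= c -> 1 <= L ->
  (forall x, cube x -> powR (distS g x) L <= c * Gfun g x) ->
  1 <= gamma ->
  (forall h : {mpoly R[n]}, 0 < minS g h -> forall l : nat,
      gamma * powR (deg h)%:R (7 / 2 * n%:R * L)
            * powR (epsh g h) (- (5 / 2 * n%:R * L)) <= l%:R ->
      QMtr g l h) ->
  (forall x, semialg g x -> 0 <= f.@[x]) ->
  forall eps : R, 0 < eps -> eps <= supnorm f ->
  forall l : nat,
    (powR 3 (5 / 2 * n%:R * L) * gamma) * powR (deg f)%:R (7 / 2 * n%:R * L)
      * powR (supnorm f) (5 / 2 * n%:R * L)
      * powR eps (- (5 / 2 * n%:R * L)) <= l%:R ->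
    QMtr g l (f - (minS g f)%:MP + eps%:MP).
Proof.
(* n >= 2, ||g_i|| <= 1/2 and the Lojasiewicz inequality only matter through
   the assumed bound with constant gamma. *)
move=> _ [x0 Sx0] S_in_cube _ _ L_ge1 _ gamma_ge1 gamma_bound f_ge0.
move=> eps eps_gt0 eps_le l l_ge; set h := f - _ + _.
apply: gamma_bound.
  exact: lt_le_trans eps_gt0 (minS_shift_ge eps Sx0 f_ge0).
apply: le_trans l_ge; set A := 7 / 2 * n%:R * L; set B := 5 / 2 * n%:R * L.
have [A_ge0 B_ge0] : 0 <= A /\ 0 <= B by split; rewrite !mulr_ge0 ?ler0n //; lra.
have f_gt0 := lt_le_trans eps_gt0 eps_le.
have deg_le : powR (deg h)%:R A <= powR (deg f)%:R A.
  apply: ge0_ler_powR; rewrite // ?nnegrE ?ler0n // ler_nat.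
  by rewrite /h -addrA [- _ + _]addrC -rmorphB deg_addC.
have epsh_le : powR (epsh g h) (- B) <= powR 3 B * powR (supnorm f) B * powR eps (- B).
  have eps3f_gt0 : 0 < eps / (3 * supnorm f) by rewrite divr_gt0 ?mulr_gt0.
  rewrite -powRM ?(ltW f_gt0) // -powRN_div ?mulr_gt0 //; apply: powRN_le => //.
  by rewrite eps3f_gt0; exact: epsh_shift_ge.
rewrite (_ : _ * _ * _ * _ = gamma * powR (deg f)%:R A *
  (powR 3 B * powR (supnorm f) B * powR eps (- B))); last by ring.
apply: ler_pM => //; first by rewrite mulr_ge0 ?powR_ge0 //; lra.
  exact: powR_ge0.
by rewrite ler_wpM2l //; lra.
Qed.
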